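(* Let $\mathcal{H}$ be a finite nonempty set of humans with embeddings $\mathbf{e}_h\in\mathbb{R}^d$, let $\mathcal{L}$ be a finite set of agents with embeddings $\mathbf{e}_l\in\mathbb{R}^d$, and let $\operatorname{dist}$ be a metric on $\mathbb{R}^d$. Let $\rho\ge0$ and suppose that for each $h\in\mathcal{H}$ a proxy agent $l_h$ with embedding $\mathbf{e}_{l_h}$ is given satisfying $\operatorname{dist}(\mathbf{e}_h,\mathbf{e}_{l_h})\le\rho$; let $\tilde{\mathcal{L}}=\{l_h: h\in\mathcal{H}\}$ (an indexed family, one proxy per human). Let $D_{\max}$ be strictly larger than every distance between any two of the embeddings of elements of $\mathcal{H}\cup\mathcal{L}\cup\tilde{\mathcal{L}}$. For any finite indexed family $S$ of objects with embeddings, define $$f(S)=\frac{1}{|\mathcal{H}|}\sum_{h\in\mathcal{H}}\Big[D_{\max}-\min_{s\in S}\operatorname{dist}(\mathbf{e}_h,\mathbf{e}_s)\Big],$$ with $\min$ over the empty family equal to $D_{\max}$. Let $1\le M\le|\mathcal{H}|$, let $L^*_{\mathcal{L}}\in\arg\max_{L\subseteq\mathcal{L},|L|\le M}f(L)$, let $L^*_{\mathcal{H}}\in\arg\max_{S\subseteq\mathcal{H},|S|\le M}f(S)$ (humans themselves used as candidates, with their own embeddings), and define the human coverage ratio $\gamma=f(L^*_{\mathcal{H}})/f(L^*_{\mathcal{L}})$ (assume $f(L^*_{\mathcal{L}})>0$). Let $L^{\text{greedy}}_{\tilde{\mathcal{L}}}$ be the output of the greedy algorithm on $\tilde{\mathcal{L}}$: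 start with $L=\emptyset$ and for $i=1,\dots,M$ add an element $l\in\tilde{\mathcal{L}}\setminus L$ maximizing $f(L\cup\{l\})-f(L)$ (ties broken arbitrarily). Then $$f\big(L^{\text{greedy}}_{\tilde{\mathcal{L}}}\big)\;\ge\;\Big(1-\frac1e\Big)\Big(\gamma\cdot f(L^*_{\mathcal{L}})-\rho\Big).$$
   Context: Here $\rho$ is the ''imitation error'' bound: each proxy $l_h$ lies in the $\rho$-neighborhood of $h$ in embedding space. Humans and agents are both compared via their behavior embeddings in $\mathbb{R}^d$ and the metric $\operatorname{dist}$. *)

From HB Require Import structures.
From mathcomp Require Import all_boot all_order all_algebra.
From mathcomp Require Import all_classical all_reals all_analysis.
Set Implicit Arguments. Unset Strict Implicit. Unset Printing Implicit Defensive.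
Import Order.TTheory GRing.Theory Num.Theory.
Local Open Scope ring_scope.

Definition is_metric (R : realType) (V : Type) (dist : V -> V -> R) : Prop :=
  [/\ forall x y, 0 <= dist x y,
      forall x y, dist x y = 0 <-> x = y,
      forall x y, dist x y = dist y x &
      forall x y z, dist x z <= dist x y + dist y z].

(* Implemented as a big min with neutral element Dmax, which equals the true
   minimum whenever Dmax exceeds all the distances involved. *)
Definition mindist (R : realType) (V : Type) (dist : V -> V -> R) (Dmax : R)
  (I : finType) (e : I -> V) (S : {set I}) (p : V) : R :=
  \big[Num.min/Dmax]_(s in S) dist p (e s).

Definition coverage (R : realType) (V : Type) (dist : V -> V -> R) (Dmax : R)
  (H : finType) (eH : H -> V) (I : finType) (e : I -> V) (S : {set I}) : R :=
  (#|H|%:R)^-1 * \sum_(h : H) (Dmax - mindist dist Dmax e S (eH h)).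

(* s is a run of the greedy algorithm for objective f on candidate index type I,
   with M steps: at step i (0-based) the current set is the set of the first i
   picks, and the i-th pick is a not-yet-chosen element with maximal marginal
   gain (ties broken arbitrarily). *)
Definition greedy_run (R : realType) (I : finType) (f : {set I} -> R) (M : nat)
  (s : seq I) : Prop :=
  size s = M /\
  forall i, (i < M)%N ->
    forall x0 : I,
    let P := [set x in take i s] in
    nth x0 s i \notin P /\
    forall l, l \notin P -> f (l |: P) - f P <= f (nth x0 s i |: P) - f P.

Definition greedy_output (I : finType) (s : seq I) : {set I} := [set x in s].

From Pilot Require Import Defs.
From HB Require Import structures.
From mathcomp Require Import all_boot all_order all_algebra.
From mathcomp Require Import all_classical all_reals all_analysis.
From mathcomp Require Import ring lra.
Set Implicit Arguments. Unset Strict Implicit. Unset Printing Implicit Defensive.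
Import Order.TTheory GRing.Theory Num.Theory.
Local Open Scope ring_scope.

(* The coverage objective is monotone and submodular with value 0 on the empty
   set, so the classical greedy analysis gives f(greedy) >= (1 - 1/e) f(OPT) for
   the proxies, taking OPT to be the best set of M humans. Replacing each human
   by its proxy moves every distance by at most rho (triangle inequality), so the
   proxy coverage of that set is at least its human coverage minus rho, and the
   human coverage of the best set of humans is gamma f(L*_L) by definition. *)

Section Coverage.
Variables (R : realType) (V : Type) (dist : V -> V -> R) (Dmax : R).
Variables (H : finType) (eH : H -> V) (I : finType) (e : I -> V).

Local Notation mindist := (mindist dist Dmax e).
Local Notation f := (coverage dist Dmax eH e).

Lemma mindist_le_Dmax (S : {set I}) p : mindist S p <= Dmax.
Proof. exact: bigmin_le_id. Qed.

Lemma mindist_le_dist (S : {set I}) p s : s \in S -> mindist S p <= dist p (e s).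
Proof. by move=> sS; apply: (bigmin_le_cond _ (P := mem S)). Qed.
Arguments mindist_le_dist {S} p {s}.

Lemma mindist_subset (S T : {set I}) p : S \subset T -> mindist T p <= mindist S p.
Proof.
move=> ST; apply: le_bigmin => [|s sS]; first exact: mindist_le_Dmax.
by apply: mindist_le_dist; apply: (fintype.subsetP ST).
Qed.

Lemma coverageB (A B : {set I}) :
  f A - f B = (#|H|%:R)^-1 * \sum_h (mindist B (eH h) - mindist A (eH h)).
Proof.
rewrite /coverage -mulrBr -sumrB; congr (_ * _); apply: eq_bigr => h _; ring.
Qed.

Lemma coverage_set0 : f finset.set0 = 0.
Proof.
by rewrite /coverage big1 ?mulr0 // => h _; rewrite /Defs.mindist big_set0 subrr.
Qed.

Lemma coverage_subset (S T : {set I}) : S \subset T -> f S <= f T.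
Proof.
move=> ST; rewrite -subr_ge0 coverageB mulr_ge0 ?invr_ge0 ?ler0n //.
by apply: sumr_ge0 => h _; rewrite subr_ge0 mindist_subset.
Qed.

(* For each human, the distance gained by adding all of OPT at once is the gain
   of its single closest element of OPT, hence at most the sum of the gains. *)
Lemma mindist_setU_gain (OPT S : {set I}) p :
  mindist S p - mindist (OPT :|: S) p <=
    \sum_(o in OPT) (mindist S p - mindist (o |: S) p).
Proof.
set gain := fun o => mindist S p - mindist (o |: S) p.
have gain_ge0 o : 0 <= gain o by rewrite subr_ge0 mindist_subset // finset.subsetUr.
have sum_ge0 : 0 <= \sum_(o in OPT) gain o by apply: sumr_ge0.
rewrite lerBlDr -lerBlDl; apply: le_bigmin => [|x].
  by have := mindist_le_Dmax S p; lra.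
rewrite inE => /orP[xO | xS]; last first.
  by have := mindist_le_dist p xS; lra.
have gain_le : gain x <= \sum_(o in OPT) gain o.
  by rewrite (bigD1 x) //= lerDl sumr_ge0.
have := mindist_le_dist p (finset.setU11 x S); rewrite /gain in gain_le; lra.
Qed.

Lemma coverage_submodular (OPT S : {set I}) :
  f OPT - f S <= \sum_(o in OPT) (f (o |: S) - f S).
Proof.
apply: (@le_trans _ _ (f (OPT :|: S) - f S)).
  by rewrite lerD2r coverage_subset ?finset.subsetUl.
rewrite coverageB (eq_bigr _ (fun o _ => coverageB _ _)) -mulr_sumr.
rewrite ler_wpM2l ?invr_ge0 ?ler0n // exchange_big /=.
by apply: ler_sum => h _; apply: mindist_setU_gain.
Qed.

End Coverage.

Lemma one_subVn_ge0 (R : numFieldType) {M : nat} : (0 < M)%N ->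
  0 <= 1 - (M%:R : R)^-1.
Proof. by move=> M_gt0; rewrite subr_ge0 invf_le1 ?ler1n ?ltr0n. Qed.

Lemma one_subVn_expn_le_expRN1 (R : realType) {M : nat} : (0 < M)%N ->
  (1 - (M%:R : R)^-1) ^+ M <= (expR 1)^-1.
Proof.
move=> M_gt0; have M_neq0 : (M%:R : R) != 0 by rewrite pnatr_eq0 -lt0n.
have q_ge0 := one_subVn_ge0 R M_gt0.
have -> : (expR 1)^-1 = expR (- (M%:R)^-1) ^+ M :> R.
  by rewrite -expRN -expRM_natl mulrN mulfV.
by rewrite lerXn2r ?nnegrE ?expR_ge0 // expR_ge1Dx.
Qed.

Section Greedy.
Variables (R : realType) (I : finType) (f : {set I} -> R).
Hypothesis f_mono : forall S T : {set I}, S \subset T -> f S <= f T.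
Hypothesis f_set0 : f finset.set0 = 0.
Variable OPT : {set I}.
Hypothesis f_submodular :
  forall S : {set I}, f OPT - f S <= \sum_(o in OPT) (f (o |: S) - f S).
Variables (M : nat) (s : seq I).
Hypothesis s_greedy : greedy_run f M s.

Let prefix i := [set x in take i s].

(* Submodularity bounds the gap f OPT - f P by |OPT| <= M marginal gains, each
   at most the greedy one. *)
Lemma greedy_gap_step {i} : (i < M)%N -> (#|OPT| <= M)%N ->
  f OPT - f (prefix i.+1) <= (1 - (M%:R)^-1) * (f OPT - f (prefix i)).
Proof.
move=> iM OPT_le; case: s_greedy => s_size greedy_choice.
have x0 : I by case: s s_size iM {greedy_choice} => [<-|].
have [_ pick_best] := greedy_choice i iM x0.
set P := prefix i; set x := nth x0 s i.
have prefix_succ : prefix i.+1 = x |: P.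
  rewrite /prefix (take_nth x0) ?s_size //.
  by apply/setP => y; rewrite !inE mem_rcons in_cons.
have gain_ge0 : 0 <= f (x |: P) - f P by rewrite subr_ge0 f_mono ?finset.subsetUr.
have gain_le o : f (o |: P) - f P <= f (x |: P) - f P.
  have [oP | /pick_best //] := boolP (o \in P).
  by rewrite (finset.setUidPr _) ?finset.sub1set // subrr.
have sum_gain : f OPT - f P <= (f (x |: P) - f P) *+ M.
  apply: le_trans (f_submodular P) _.
  apply: le_trans (ler_sum _ (fun o _ => gain_le o)) _.
  by rewrite sumr_const ler_wpMn2l.
have M_gt0 : 0 < (M%:R : R) by rewrite ltr0n (leq_ltn_trans _ iM).
have avg_gain : (f OPT - f P) / M%:R <= f (x |: P) - f P.
  by rewrite ler_pdivrMr // mulr_natr.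
by rewrite prefix_succ; lra.
Qed.

Lemma greedy_gap k : (k <= M)%N -> (#|OPT| <= M)%N ->
  f OPT - f (prefix k) <= (1 - (M%:R)^-1) ^+ k * f OPT.
Proof.
move=> + OPT_le; elim: k => [_|k IHk kM].
  have -> : prefix 0 = finset.set0 by apply/setP => y; rewrite !inE take0.
  by rewrite f_set0 expr0 mul1r subr0.
apply: le_trans (greedy_gap_step kM OPT_le) _.
rewrite exprS -mulrA ler_wpM2l ?IHk ?(ltnW kM) //.
by rewrite one_subVn_ge0 ?(leq_ltn_trans _ kM).
Qed.

Lemma greedy_approx : (#|OPT| <= M)%N -> (0 < M)%N ->
  (1 - (expR 1)^-1) * f OPT <= f (greedy_output s).
Proof.
move=> OPT_le M_gt0.
have output_prefix : greedy_output s = prefix M.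
  by case: s_greedy => <- _; rewrite /prefix take_size.
have gap := greedy_gap (leqnn M) OPT_le.
have q_bound := one_subVn_expn_le_expRN1 R M_gt0.
have OPT_ge0 : 0 <= f OPT by rewrite -f_set0 f_mono ?finset.sub0set.
have : (expR 1)^-1 * f OPT >= (1 - (M%:R)^-1) ^+ M * f OPT by rewrite ler_wpM2r.
by rewrite output_prefix; lra.
Qed.

End Greedy.

Section Perturbation.
Variables (R : realType) (V : Type) (dist : V -> V -> R) (Dmax rho : R).
Hypothesis dist_triangle : forall x y z, dist x z <= dist x y + dist y z.
Hypothesis rho_ge0 : 0 <= rho.
Variables (H : finType) (eH : H -> V) (I : finType) (e e' : I -> V).
Hypothesis e'_close : forall i, dist (e i) (e' i) <= rho.

Lemma mindist_perturb (S : {set I}) p :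
  mindist dist Dmax e' S p - rho <= mindist dist Dmax e S p.
Proof.
apply: le_bigmin => [|i iS].
  by have := mindist_le_Dmax dist Dmax e' S p; have := rho_ge0; lra.
have := mindist_le_dist dist Dmax e' p iS; have := dist_triangle p (e i) (e' i).
by have := e'_close i; lra.
Qed.

Lemma coverage_perturb (S : {set I}) : (0 < #|H|)%N ->
  coverage dist Dmax eH e S - rho <= coverage dist Dmax eH e' S.
Proof.
move=> H_gt0; have rho_avg : rho = (#|H|%:R)^-1 * \sum_(h : H) rho.
  by rewrite sumr_const -[rho *+ _]mulr_natl mulrA mulVf ?mul1r // pnatr_eq0 -lt0n.
rewrite rho_avg /coverage -mulrBr -sumrB ler_wpM2l ?invr_ge0 ?ler0n //.
by apply: ler_sum => h _; have := mindist_perturb S (eH h); lra.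
Qed.

End Perturbation.
Theorem theorem2 (R : realType) (d : nat) (dist : 'rV[R]_d -> 'rV[R]_d -> R)
  (Hh : finType) (Ag : finType)
  (eH : Hh -> 'rV[R]_d) (eA : Ag -> 'rV[R]_d) (eP : Hh -> 'rV[R]_d)
  (rho Dmax : R) (M : nat)
  (LstarA : {set Ag}) (LstarH : {set Hh}) (s : seq Hh) :
  is_metric dist ->
  (0 < #|Hh|)%N ->
  0 <= rho ->
  (forall h, dist (eH h) (eP h) <= rho) ->
  (forall x y : 'rV[R]_d,
     ((exists h, x = eH h) \/ (exists a, x = eA a) \/ (exists h, x = eP h)) ->
     ((exists h, y = eH h) \/ (exists a, y = eA a) \/ (exists h, y = eP h)) ->
     dist x y < Dmax) ->
  (1 <= M <= #|Hh|)%N ->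
  (#|LstarA| <= M)%N ->
  (forall L : {set Ag}, (#|L| <= M)%N ->
     coverage dist Dmax eH eA L <= coverage dist Dmax eH eA LstarA) ->
  (#|LstarH| <= M)%N ->
  (forall S : {set Hh}, (#|S| <= M)%N ->
     coverage dist Dmax eH eH S <= coverage dist Dmax eH eH LstarH) ->
  0 < coverage dist Dmax eH eA LstarA ->
  greedy_run (coverage dist Dmax eH eP) M s ->
  let gamma := coverage dist Dmax eH eH LstarH / coverage dist Dmax eH eA LstarA in
  coverage dist Dmax eH eP (greedy_output s) >=
    (1 - (expR 1)^-1) * (gamma * coverage dist Dmax eH eA LstarA - rho).
Proof.
move=> [_ _ _ dist_triangle] H_gt0 rho_ge0 eP_close _ /andP[M_gt0 _] _ _
  LstarH_le _ fA_gt0 s_greedy /=.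
rewrite divfK ?gt_eqF //.
have greedy := greedy_approx (coverage_subset dist Dmax eH eP)
  (coverage_set0 dist Dmax eH eP) (coverage_submodular dist Dmax eH eP LstarH)
  s_greedy LstarH_le M_gt0.
have proxy := coverage_perturb Dmax dist_triangle rho_ge0 eH eP_close LstarH H_gt0.
have e_inv_le1 : (expR 1 : R)^-1 <= 1.
  by rewrite invf_le1 ?expR_gt0 // (le_trans _ (expR_ge1Dx 1)) // lerDl.
by apply: le_trans greedy; rewrite ler_wpM2l // subr_ge0.
Qed.
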